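(* Let $G=\mathfrak{S}_3$ with identity $id$. Let $(\mu_t)_{t\ge0}$ (resp. $(\eta_t)_{t\ge0}$) be the continuous convolution semigroup of probability measures on $G$ starting from $\delta_{id}$ associated with the jump measure $m$ (resp. $m_0$), where $m((12))=0,\ m((13))=1,\ m((23))=2,\ m((123))=2,\ m((132))=0$, and $m_0((12))=m_0((13))=m_0((23))=m_0((123))=m_0((132))=1$ (both measures vanish at $id$). Then $\mu_1$ is quasi-invariant by conjugation, and for every $n\in\mathbb{N}$, $\int_G(\mu_1^g)^{*n}\,dg=\eta_1^{*n}$.
   Context: The convolution semigroup with jump measure $m$ is the family of laws of the compound Poisson process with jump measure $m$: $\mu_t=e^{-t\,m(G)}\sum_{k\ge0}\frac{t^k}{k!}m^{*k}$ (with $m^{*0}=\delta_{id}$). For $g\in G$, $\mu^g$ is the image of $\mu$ under $x\mapsto g^{-1}xg$; $dg$ is the uniform probability measure on $G$. A probability measure $\mu$ is quasi-invariant by conjugation if there exists a probability measure $\nu$ with $\int_G(\mu^g)^{*n}dg=\nu^{*n}$ for all $n\in\mathbb{N}$. *)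

From HB Require Import structures.
From mathcomp Require Import all_boot all_order all_algebra all_fingroup.
From mathcomp Require Import all_classical all_reals all_analysis.
Set Implicit Arguments. Unset Strict Implicit. Unset Printing Implicit Defensive.
Import Order.TTheory GRing.Theory Num.Theory.
Import numFieldNormedType.Exports.
Local Open Scope ring_scope.

(* G = S_3 = permutations of {0,1,2} (standing for {1,2,3}). *)

Section Defs.
Variable R : realType.

Definition meas := {perm 'I_3} -> R.

Definition delta_id : meas := fun x => (x == 1%g)%:R.

Definition conv (mu nu : meas) : meas :=
  fun x => \sum_(y : {perm 'I_3}) mu y * nu (y^-1 * x)%g.

Definition convn (mu : meas) (n : nat) : meas := iter n (conv mu) delta_id.

(* mu^g = image of mu under x |-> g^-1 x g  (= x ^ g in MathComp);
   hence mu^g({y}) = mu({g y g^-1}) = mu(y ^ g^-1). *)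
Definition conj_img (mu : meas) (g : {perm 'I_3}) : meas :=
  fun y => mu (y ^ g^-1)%g.

Definition unif_avg (f : {perm 'I_3} -> meas) : meas :=
  fun x => (#|{perm 'I_3}|%:R)^-1 * \sum_(g : {perm 'I_3}) f g x.

Definition is_prob (nu : meas) : Prop :=
  (forall x, 0 <= nu x) /\ \sum_(x : {perm 'I_3}) nu x = 1.

Definition mass (m : meas) : R := \sum_(x : {perm 'I_3}) m x.

(* law at time t of the compound Poisson process with jump measure m:
   mu_t = e^{-t m(G)} sum_{k>=0} t^k/k! m^{*k}
   (the series, absolutely convergent, is the limit of its partial sums) *)
Definition cpsg (m : meas) (t : R) : meas :=
  fun x => expR (- (t * mass m)) *
           limn (series (fun k : nat => t ^+ k / (k`!)%:R * convn m k x)).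

Definition quasi_invariant (mu : meas) : Prop :=
  exists nu : meas, is_prob nu /\
    forall n : nat, unif_avg (fun g => convn (conj_img mu g) n) = convn nu n.

End Defs.

Definition i0 : 'I_3 := inord 0.
Definition i1 : 'I_3 := inord 1.
Definition i2 : 'I_3 := inord 2.

Definition t12 : {perm 'I_3} := tperm i0 i1.
Definition t13 : {perm 'I_3} := tperm i0 i2.
Definition t23 : {perm 'I_3} := tperm i1 i2.
(* the 3-cycle (123): 1 -> 2 -> 3 -> 1 *)
Definition c123 : {perm 'I_3} := (tperm i0 i1 * tperm i0 i2)%g.
Definition c132 : {perm 'I_3} := (c123^-1)%g.

Lemma c123_spec : [/\ c123 i0 = i1, c123 i1 = i2 & c123 i2 = i0].
Proof.
have n01 : i0 != i1 by apply/eqP => /(congr1 val); rewrite /= !inordK.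
have n02 : i0 != i2 by apply/eqP => /(congr1 val); rewrite /= !inordK.
have n12 : i1 != i2 by apply/eqP => /(congr1 val); rewrite /= !inordK.
have n10 : i1 != i0 by rewrite eq_sym.
have n20 : i2 != i0 by rewrite eq_sym.
have n21 : i2 != i1 by rewrite eq_sym.
rewrite /c123 !permM; split.
- by rewrite tpermL (tpermD n01 n21).
- by rewrite tpermR tpermL.
- by rewrite (tpermD n02 n12) tpermR.
Qed.

Definition m_jump (R : realType) : meas R := fun x =>
  if x == t13 then 1 else if x == t23 then 2 else if x == c123 then 2 else 0.

Definition m0_jump (R : realType) : meas R := fun x => if x == 1%g then 0 else 1.

From Pilot Require Import Defs.
From HB Require Import structures.
From mathcomp Require Import all_boot all_order all_algebra all_fingroup.
From mathcomp Require Import all_classical all_reals all_analysis.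
From mathcomp Require Import ring.
Set Implicit Arguments.
Unset Strict Implicit.
Unset Printing Implicit Defensive.
Import Order.TTheory GRing.Theory Num.Theory.
Import numFieldNormedType.Exports.
Local Open Scope classical_set_scope.
Local Open Scope ring_scope.

(* m = -delta_id + 1 + d and m0 = -delta_id + 1, where 1 is the counting
   measure and d is a signed measure of total mass 0 with d * d = 0 whose
   conjugates average to 0.  Since 1 * 1 = 6 * 1 and 1 * d = d * 1 = 0, the span
   of delta_id, 1 and d is a commutative algebra, and on it the compound
   Poisson semigroup is explicit:
     mu_t  = e^{-6t} delta_id + (1 - e^{-6t})/6 + t e^{-6t} d,
     eta_t = e^{-6t} delta_id + (1 - e^{-6t})/6.
   Conjugating by g replaces d by d^g, which has the same three properties, so
   (mu_1^g)^{*n} is eta_1^{*n} plus a multiple of d^g; averaging over g kills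
   that multiple. *)

Lemma ord3_cases (i : 'I_3) : [\/ i = i0, i = i1 | i = i2].
Proof.
by case: i => -[|[|[|k]]] ? //; [constructor 1|constructor 2|constructor 3];
  apply/val_inj; rewrite /= inordK.
Qed.

Lemma ord3_eqE :
  ((i0 == i1) = false) * ((i0 == i2) = false) * ((i1 == i0) = false) *
  ((i1 == i2) = false) * ((i2 == i0) = false) * ((i2 == i1) = false).
Proof. by do !split; apply/negbTE/eqP => /(congr1 val); rewrite /= !inordK. Qed.

Lemma perm3E :
  (t12 i0 = i1) * (t12 i1 = i0) * (t12 i2 = i2) *
  (t13 i0 = i2) * (t13 i1 = i1) * (t13 i2 = i0) *
  (t23 i0 = i0) * (t23 i1 = i2) * (t23 i2 = i1) *
  (c123 i0 = i1) * (c123 i1 = i2) * (c123 i2 = i0) *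
  (c132 i0 = i2) * (c132 i1 = i0) * (c132 i2 = i1).
Proof.
have [c0 c1 c2] := c123_spec.
by do !split; rewrite ?tpermL ?tpermR ?tpermD ?ord3_eqE //;
  apply: (canLR (permK c123)).
Qed.

Lemma perm3_invE :
  (t12^-1 = t12)%g * (t13^-1 = t13)%g * (t23^-1 = t23)%g *
  (c123^-1 = c132)%g * (c132^-1 = c123)%g.
Proof. by do !split; rewrite ?tpermV ?invgK. Qed.

Lemma eq_perm3 (s t : {perm 'I_3}) :
  (s == t) = [&& s i0 == t i0, s i1 == t i1 & s i2 == t i2].
Proof.
apply/eqP/and3P => [-> //|[/eqP e0 /eqP e1 /eqP e2]].
by apply/permP => i; case: (ord3_cases i) => ->.
Qed.

Lemma card_perm3 : #|{perm 'I_3}| = 6%N.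
Proof. by rewrite card_Sn. Qed.

Definition perm3_seq : seq {perm 'I_3} := [:: 1%g; t12; t13; t23; c123; c132].

Lemma uniq_perm3_seq : uniq perm3_seq.
Proof. by rewrite /= !inE !eq_perm3 !perm1 !perm3E !ord3_eqE !eqxx. Qed.

Lemma mem_perm3_seq : perm3_seq =i predT.
Proof.
apply/subset_cardP; last exact: subset_predT.
by rewrite (card_uniqP uniq_perm3_seq) card_perm3.
Qed.

Lemma perm3_ind (P : {perm 'I_3} -> Prop) :
  P 1%g -> P t12 -> P t13 -> P t23 -> P c123 -> P c132 -> forall x, P x.
Proof.
move=> P1 P12 P13 P23 P123 P132 x; have := mem_perm3_seq x.
by rewrite !inE => /or4P[|||/or3P[||]] /eqP->.
Qed.

Lemma sum_perm3 (V : nmodType) (F : {perm 'I_3} -> V) :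
  \sum_x F x = F 1%g + F t12 + F t13 + F t23 + F c123 + F c132.
Proof.
rewrite (eq_bigl (mem perm3_seq)) => [|x]; last exact/esym/mem_perm3_seq.
by rewrite -big_uniq ?uniq_perm3_seq //= !big_cons big_nil !addrA addr0.
Qed.

Lemma sum_mulVg (gT : finGroupType) (V : nmodType) (F : gT -> V) (x : gT) :
  \sum_y F (y^-1 * x)%g = \sum_y F y.
Proof.
have inj_xV : injective (fun z => (x * z^-1)%g) by move=> y z /mulgI /invg_inj.
rewrite (reindex_inj inj_xV); apply: eq_bigr => z _.
by rewrite invMg invgK mulgKV.
Qed.

Section ExpSeries.
Variable R : realType.

Lemma cvg_series_exp_coeff (y : R) : series (exp_coeff y) @ \oo --> expR y.
Proof. exact: is_cvg_series_exp_coeff. Qed.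

Lemma cvg_series_exp_coeff_deriv (y : R) :
  series (fun k => k%:R * y ^+ k.-1 / k`!%:R) @ \oo --> expR y.
Proof.
rewrite -cvg_shiftS.
suff -> : [sequence series (fun k => k%:R * y ^+ k.-1 / k`!%:R) n.+1]_n =
          series (exp_coeff y) by exact: cvg_series_exp_coeff.
apply/funext => n; rewrite /series /= big_nat_recl //= mul0r mul0r add0r.
apply: eq_bigr => k _; rewrite /exp_coeff /= factS natrM.
by field; rewrite addrC natr1 !pnatr_eq0 -!lt0n fact_gt0.
Qed.

End ExpSeries.

Section CombAlgebra.
Variable R : realType.
Implicit Types (a b c t : R) (e f h : meas R).
Local Notation delta := (delta_id R).

Lemma sum_perm3_cst c : \sum_(x : {perm 'I_3}) c = 6 * c.
Proof. by rewrite sumr_const card_perm3 mulr_natl. Qed.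

Lemma sum_delta_mul (F : {perm 'I_3} -> R) : \sum_y delta y * F y = F 1%g.
Proof.
rewrite (bigD1 1%g) //= big1 ?addr0 => [|y /negbTE y1]; last first.
  by rewrite /delta_id y1 mul0r.
by rewrite /delta_id eqxx mul1r.
Qed.

Lemma sum_delta : \sum_y delta y = 1.
Proof.
rewrite (eq_bigr (fun y => delta y * 1)) => [|y _]; last by rewrite mulr1.
by rewrite sum_delta_mul.
Qed.

Lemma sum_mul_delta (F : {perm 'I_3} -> R) x :
  \sum_y F y * delta (y^-1 * x)%g = F x.
Proof.
rewrite (bigD1 x) //= big1 ?addr0 => [|y yx]; last first.
  by rewrite /delta_id -eq_mulVg1 (negbTE yx) mulr0.
by rewrite /delta_id mulVg eqxx mulr1.
Qed.

Lemma conj_img_conv f h g :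
  conj_img (Defs.conv f h) g = Defs.conv (conj_img f g) (conj_img h g).
Proof.
apply/funext => y; rewrite /conj_img /Defs.conv.
rewrite [RHS](reindex_inj (conjg_inj g)) /=.
by apply: eq_bigr => z _; rewrite conjgK conjMg conjVg conjgK.
Qed.

Lemma sum_conj_img f g : \sum_y conj_img f g y = \sum_y f y.
Proof.
rewrite (reindex_inj (conjg_inj g)).
by apply: eq_bigr => z _; rewrite /conj_img conjgK.
Qed.

Definition comb a b c e : meas R := fun x => a * delta x + b + c * e x.

Lemma mass_comb a b c e : mass (comb a b c e) = a + 6 * b + c * \sum_x e x.
Proof.
by rewrite /mass /comb !big_split /= -!mulr_sumr sum_perm3_cst sum_delta mulr1.
Qed.

Lemma conj_img_comb a b c e g :
  conj_img (comb a b c e) g = comb a b c (conj_img e g).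
Proof. by apply/funext => y; rewrite /conj_img /comb /delta_id conjg_eq1. Qed.

Lemma is_prob_comb a b e :
  0 <= a -> 0 <= b -> a + 6 * b = 1 -> is_prob (comb a b 0 e).
Proof.
move=> a_ge0 b_ge0 ab1; split=> [x|].
  by rewrite /comb mul0r addr0 addr_ge0 // mulr_ge0 // /delta_id ler0n.
by have := mass_comb a b 0 e; rewrite /mass mul0r addr0 ab1.
Qed.

Section Nilpotent.
Variable e : meas R.
Hypothesis sum_e : \sum_x e x = 0.
Hypothesis conv_ee : forall x, Defs.conv e e x = 0.

Lemma conv_comb a b c a' b' c' :
  Defs.conv (comb a b c e) (comb a' b' c' e) =
  comb (a * a') (a * b' + b * a' + 6 * b * b') (a * c' + c * a') e.
Proof.
apply/funext => x; rewrite /Defs.conv /comb.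
pose H y := a' * delta (y^-1 * x)%g + b' + c' * e (y^-1 * x)%g.
transitivity (a * (\sum_y delta y * H y) + b * (\sum_y H y)
  + c * (\sum_y e y * H y)).
  by rewrite !mulr_sumr -!big_split /=; apply: eq_bigr => y _; rewrite /H; ring.
have sum_H : \sum_y H y = a' + 6 * b'.
  rewrite /H !big_split /= -!mulr_sumr sum_perm3_cst.
  by rewrite (sum_mulVg delta) (sum_mulVg e) sum_e sum_delta; ring.
have sum_eH : \sum_y e y * H y = a' * e x.
  rewrite /H (eq_bigr (fun y => a' * (e y * delta (y^-1 * x)%g) + b' * e y
     + c' * (e y * e (y^-1 * x)%g))) => [|y _]; last by ring.
  rewrite !big_split /= -!mulr_sumr sum_mul_delta sum_e.
  by have := conv_ee x; rewrite /Defs.conv => ->; ring.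
by rewrite sum_H sum_eH sum_delta_mul /H invg1 mul1g; ring.
Qed.

Lemma convn_comb a b c n :
  convn (comb a b c e) n =
  comb (a ^+ n) (((a + 6 * b) ^+ n - a ^+ n) / 6) (n%:R * a ^+ n.-1 * c) e.
Proof.
elim: n => [|n IH].
  by apply/funext => x; rewrite /convn /= /comb subrr !mul0r mul1r !addr0.
rewrite /convn iterS -/(convn _ n) IH conv_comb; congr comb.
- by rewrite exprS.
- by rewrite !exprS; field.
- case: n {IH} => [|n] /=; first ring.
  by rewrite exprS -[n.+2%:R]natr1 -[n.+1%:R]natr1; ring.
Qed.

Lemma cpsg_comb t a b c :
  cpsg (comb a b c e) t =
  comb (expR (- (6 * b * t))) ((1 - expR (- (6 * b * t))) / 6)
       (c * t * expR (- (6 * b * t))) e.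
Proof.
apply/funext => x; rewrite /cpsg mass_comb sum_e mulr0 addr0.
set D := fun (y : R) k => k%:R * y ^+ k.-1 / k`!%:R.
set A := expR (t * a); set B := expR (t * (a + 6 * b)).
have term k : t ^+ k / k`!%:R * convn (comb a b c e) k x =
    delta x * exp_coeff (t * a) k
    + (exp_coeff (t * (a + 6 * b)) k - exp_coeff (t * a) k) / 6
    + c * t * e x * D (t * a) k.
  rewrite convn_comb /comb /exp_coeff /D /= !exprMn.
  by case: k => [|k]; rewrite ?mul0r /=; [|rewrite !exprS]; field.
have series_term n :
    series (fun k => t ^+ k / k`!%:R * convn (comb a b c e) k x) n =
    delta x * series (exp_coeff (t * a)) n
    + (series (exp_coeff (t * (a + 6 * b))) n - series (exp_coeff (t * a)) n) / 6
    + c * t * e x * series (D (t * a)) n.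
  rewrite /series /= -sumrB !mulr_sumr mulr_suml -!big_split /=.
  by apply: eq_bigr => k _; rewrite term.
have cvg_series : series (fun k => t ^+ k / k`!%:R * convn (comb a b c e) k x)
    @ \oo --> delta x * A + (B - A) / 6 + c * t * e x * A.
  rewrite (funext series_term).
  apply: cvgD; first apply: cvgD.
  - by apply: cvgMl_tmp; apply: cvg_series_exp_coeff.
  - by apply: cvgMr_tmp; apply: cvgB; apply: cvg_series_exp_coeff.
  - by apply: cvgMl_tmp; apply: cvg_series_exp_coeff_deriv.
rewrite (cvg_lim _ cvg_series) //.
set E := expR (- (t * (a + 6 * b))).
have EA : E * A = expR (- (6 * b * t)) by rewrite -expRD; congr expR; ring.
have EB : E * B = 1 by rewrite -expRD addNr expR0.
transitivity ((E * A) * delta x + (E * B - E * A) / 6 + c * t * (E * A) * e x).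
  by ring.
by rewrite EA EB.
Qed.

End Nilpotent.

Lemma unif_avg_conj_convn_comb e a b c n :
  \sum_x e x = 0 -> (forall x, Defs.conv e e x = 0) ->
  (forall x, \sum_g conj_img e g x = 0) ->
  unif_avg (fun g => convn (conj_img (comb a b c e) g) n) =
  convn (comb a b 0 e) n.
Proof.
move=> sum_e conv_ee avg_e; apply/funext => x.
have convn_conj g : convn (conj_img (comb a b c e) g) n =
    comb (a ^+ n) (((a + 6 * b) ^+ n - a ^+ n) / 6) (n%:R * a ^+ n.-1 * c)
      (conj_img e g).
  rewrite conj_img_comb convn_comb // ?sum_conj_img // => y.
  by rewrite -conj_img_conv /conj_img conv_ee.
rewrite /unif_avg; under eq_bigr do rewrite convn_conj.
rewrite convn_comb // /comb !big_split /= -!mulr_sumr !sum_perm3_cst avg_e.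
by rewrite card_perm3; field.
Qed.

End CombAlgebra.

Section NilpotentExample.
Variable R : realType.

(* In cycle notation: -1 at (12) and (132), +1 at (23) and (123), 0 elsewhere,
   i.e. x |-> [x(2) = 3] - [x(2) = 1].  It lies in the 2-dimensional simple
   block of the group algebra, where it is nilpotent, and it sums to zero over
   each conjugacy class. *)
Definition nilp : meas R := fun x => (x i1 == i2)%:R - (x i1 == i0)%:R.

Lemma sum_nilp : \sum_x nilp x = 0.
Proof. by rewrite sum_perm3 /nilp ?perm1 ?perm3E ?ord3_eqE ?eqxx /=; ring. Qed.

Lemma conv_nilp x : Defs.conv nilp nilp x = 0.
Proof.
move: x; apply: perm3_ind;
by rewrite /Defs.conv sum_perm3 /nilp !perm3_invE ?invg1 !permM ?perm1 ?perm3E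
  ?ord3_eqE ?eqxx /=; ring.
Qed.

Lemma sum_conj_img_nilp x : \sum_g conj_img nilp g x = 0.
Proof.
move: x; apply: perm3_ind;
by rewrite sum_perm3 /conj_img /nilp !conjgE !invgK !perm3_invE ?invg1 !permM
  ?perm1 ?perm3E ?ord3_eqE ?eqxx /=; ring.
Qed.

Lemma m_jump_comb : m_jump R = comb (-1) 1 1 nilp.
Proof.
apply/funext; apply: perm3_ind;
by rewrite /m_jump /comb /delta_id /nilp !eq_perm3 ?perm1 ?perm3E ?ord3_eqE
  ?eqxx /=; ring.
Qed.

Lemma m0_jump_comb : m0_jump R = comb (-1) 1 0 nilp.
Proof.
apply/funext; apply: perm3_ind;
by rewrite /m0_jump /comb /delta_id /nilp !eq_perm3 ?perm1 ?perm3E ?ord3_eqE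
  ?eqxx /=; ring.
Qed.

End NilpotentExample.

Theorem lemma8p17 (R : realType) :
  quasi_invariant (cpsg (m_jump R) 1) /\
  forall n : nat,
    unif_avg (fun g => convn (conj_img (cpsg (m_jump R) 1) g) n)
    = convn (cpsg (m0_jump R) 1) n.
Proof.
set a : R := expR (- 6).
have mu1 : cpsg (m_jump R) 1 = comb a ((1 - a) / 6) a (nilp R).
  by rewrite m_jump_comb (cpsg_comb (sum_nilp R) (@conv_nilp R)) !mulr1 mul1r.
have eta1 : cpsg (m0_jump R) 1 = comb a ((1 - a) / 6) 0 (nilp R).
  by rewrite m0_jump_comb (cpsg_comb (sum_nilp R) (@conv_nilp R)) !mulr1 !mul0r.
have avg n : unif_avg (fun g => convn (conj_img (cpsg (m_jump R) 1) g) n)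
    = convn (cpsg (m0_jump R) 1) n.
  rewrite mu1 eta1; apply: unif_avg_conj_convn_comb.
  - exact: sum_nilp.
  - exact: conv_nilp.
  - exact: sum_conj_img_nilp.
split=> //; exists (cpsg (m0_jump R) 1); split=> //.
rewrite eta1; apply: is_prob_comb.
- exact/ltW/expR_gt0.
- by rewrite divr_ge0 // subr_ge0 expR_le1 lerNl oppr0 ler0n.
- by field.
Qed.
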